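(* In the setting described in the context, the pair $B,B^*$ is a tridiagonal pair on $V$. The sequence $bq^{2i-d}$ ($0\le i\le d$) is a standard ordering of the eigenvalues of $B$ and the sequence $b^*q^{d-2i}$ ($0\le i\le d$) is a standard ordering of the eigenvalues of $B^*$.
   Context: $\mathbb K$ is an algebraically closed field, $q\in\mathbb K$ nonzero and not a root of unity, $V$ a nonzero finite-dimensional $\mathbb K$-vector space. A tridiagonal pair on $V$ is an ordered pair $A,A^*$ of linear maps $V\to V$ such that: (i) each of $A,A^*$ is diagonalizable; (ii) there is an ordering $V_0,\dots,V_d$ of the eigenspaces of $A$ with $A^*V_i\subseteq V_{i-1}+V_i+V_{i+1}$ ($V_{-1}=V_{d+1}=0$); (iii) there is an ordering $V^*_0,\dots,V^*_\delta$ of the eigenspaces of $A^*$ with $AV^*_i\subseteq V^*_{i-1}+V^*_i+V^*_{i+1}$ ($V^*_{-1}=V^*_{\delta+1}=0$); (iv) no subspace $W\ne0,V$ satisfies $AW\subseteq W$, $A^*W\subseteq W$. It is known $d=\delta$; orderings of eigenspaces as in (ii),(iii) are called standard, and an ordering of eigenvalues is standard if the corresponding eigenspace ordering is. Setting: $A,A^*$ is a tridiagonal pair on $V$; $V_0,\dots,V_d$ (resp. $V^*_0,\dots,V^*_d$) is a standard ordering of the eigenspaces of $A$ (resp. $A^*$); the eigenvalue of $A$ on $V_i$ is $aq^{2i-d}$ and that of $A^*$ on $V^*_i$ is $a^*q^{d-2i}$ for some nonzero $a,a^*\in\mathbb K$; $b,b^*\in\mathbb K$ are nonzero. For $0\le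 i\le d$ the subspaces $(V^*_0+\cdots+V^*_i)\cap(V_0+\cdots+V_{d-i})$ form a decomposition of $V$ (nonzero, direct sum equal to $V$), as do the subspaces $(V^*_{d-i}+\cdots+V^*_d)\cap(V_i+\cdots+V_d)$. $B:V\to V$ is the linear map acting as $bq^{2i-d}I$ on $(V^*_0+\cdots+V^*_i)\cap(V_0+\cdots+V_{d-i})$ for each $i$, and $B^*:V\to V$ is the linear map acting as $b^*q^{d-2i}I$ on $(V^*_{d-i}+\cdots+V^*_d)\cap(V_i+\cdots+V_d)$ for each $i$. *)

From HB Require Import structures.
From mathcomp Require Import all_boot all_order all_algebra.
Set Implicit Arguments. Unset Strict Implicit. Unset Printing Implicit Defensive.
Import GRing.Theory.
Local Open Scope ring_scope.

Section TD.
Variables (K : fieldType) (V : vectType K).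

Definition leigenspace (f : 'End(V)) (t : K) : {vspace V} :=
  lker (f - t *: \1%VF).
Definition leigenvalue (f : 'End(V)) (t : K) : bool := leigenspace f t != 0%VS.

Definition diagonalizable (f : 'End(V)) : Prop :=
  exists s : seq K, (\sum_(t <- s) leigenspace f t)%VS = fullv.

Definition eigsp (f : 'End(V)) (d : nat) (th : nat -> K) (i : nat) : {vspace V} :=
  if (i <= d)%N then leigenspace f (th i) else 0%VS.

Definition standard_ordering (f g : 'End(V)) (d : nat) (th : nat -> K) : Prop :=
  [/\ uniq [seq th i | i <- iota 0 d.+1],
      (forall i, (i <= d)%N -> leigenvalue f (th i)),
      (forall t, leigenvalue f t -> exists2 i, (i <= d)%N & t = th i) &
      (forall i, (i <= d)%N ->
         (g @: eigsp f d th i <=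
            eigsp f d th i.-1 + eigsp f d th i + eigsp f d th i.+1)%VS)].
(* note: for i = 0, V_{i-1} = V_{-1} = 0; using eigsp f d th 0.-1 = V_0
   there is harmless since V_0 is already a summand. *)

Definition tridiagonal_pair (A As : 'End(V)) : Prop :=
  [/\ (fullv : {vspace V}) != 0%VS,
      diagonalizable A /\ diagonalizable As,
      (exists d th, standard_ordering A As d th),
      (exists d th, standard_ordering As A d th) &
      forall W : {vspace V}, (A @: W <= W)%VS -> (As @: W <= W)%VS ->
        W = 0%VS \/ W = fullv].

End TD.

Definition qexp (K : fieldType) (q : K) (i d : nat) : K :=
  q ^ ((2 * i)%:Z - d%:Z).

Definition qexp_rev (K : fieldType) (q : K) (i d : nat) : K :=
  q ^ (d%:Z - (2 * i)%:Z).

(* On the split decomposition [U_i], [B] acts as [b q^(2i-d)], [A - a q^(d-2i)] maps [U_i]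
   into [U_(i+1)] and [As - as q^(d-2i)] maps it into [U_(i-1)]; symmetrically on [U'_i].
   Comparing eigenvalues yields q-Weyl relations such as
   [A Bs - q^2 Bs A = (1 - q^2) a bs] and [As Bs - q^-2 Bs As = (1 - q^-2) as bs].
   Projecting them onto [U_(i+s)] and [U_(i-s)] shows, by downward induction on [s >= 2],
   that [Bs U_i] has no component there, because [q] is not a root of unity: [Bs] is
   tridiagonal on the [U_i] and, in the same way, [B] on the [U'_i].
   A subspace [W] stable under [B] and [Bs] is the sum of its intersections with the [U_i],
   and also with the [U'_i]; a dimension count comparing the two splittings of [W] at
   complementary indices shows that [W] splits along every flag [V_0 + ... + V_(k-1)],
   [V_k + ... + V_d] of eigenspaces of [A], and likewise for [As], so [W] is stable under
   [A] and [As]. *)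

From mathcomp Require Import all_boot all_order all_algebra.
From mathcomp Require Import zify ring.
Set Implicit Arguments. Unset Strict Implicit. Unset Printing Implicit Defensive.
Import GRing.Theory.
Local Open Scope ring_scope.

Section LinearAlgebra.
Variables (K : fieldType) (V : vectType K).

Lemma directv_sum_capC (I : finType) (Us : I -> {vspace V}) (P : pred I) :
  directv (\sum_i Us i) ->
  ((\sum_(i | P i) Us i) :&: (\sum_(i | ~~ P i) Us i) = 0)%VS.
Proof.
move/directv_sum_independent => Uind; apply/eqP; rewrite -subv0.
apply/subvP => v /memv_capP[/memv_sumP[us Uus ->] /memv_sumP[vs Uvs vsE]].
pose ws i := if P i then us i else - vs i.
have Uws i : true -> ws i \in Us i.
  by rewrite /ws; case: ifP => Pi _; [exact: Uus | rewrite memvN Uvs ?Pi].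
have ws0 : \sum_(i | true) ws i = 0.
  rewrite (bigID P) /= (eq_bigr us) => [|i Pi]; last by rewrite /ws Pi.
  rewrite [X in _ + X](eq_bigr (fun i => - vs i)) => [|i Pi]; last by rewrite /ws (negbTE Pi).
  by rewrite sumrN vsE subrr.
rewrite memv0; apply/eqP/big1 => i Pi.
by have := Uind ws Uws ws0 i isT; rewrite /ws Pi.
Qed.

Lemma memv_leigenspace (f : 'End(V)) t v : (v \in leigenspace f t) = (f v == t *: v).
Proof. by rewrite memv_ker !lfun_simp /= subr_eq0. Qed.

Lemma leigenvector_sum_eq0 (f : 'End(V)) (I : eqType) (th : I -> K) (r : seq I)
    (us : I -> V) :
  uniq r -> {in r &, injective th} ->
  (forall i, i \in r -> us i \in leigenspace f (th i)) ->
  \sum_(i <- r) us i = 0 -> forall i, i \in r -> us i = 0.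
Proof.
elim: r us => [//|k r IHr] us /= /andP[kNr r_uniq] th_inj Eus.
have fus i : i \in k :: r -> f (us i) = th i *: us i.
  by move/Eus; rewrite memv_leigenspace => /eqP.
rewrite big_cons => sum0.
(* Applying [f - th k] kills [us k] and rescales the other components. *)
pose vs i := (th i - th k) *: us i.
have vs0 : forall i, i \in r -> vs i = 0.
  apply: IHr r_uniq (sub_in2 (fun x xr => mem_behead xr) th_inj) _ _ => [j jr|].
    by rewrite memvZ ?Eus ?inE ?jr ?orbT.
  have : f (us k + \sum_(j <- r) us j) - th k *: (us k + \sum_(j <- r) us j) = 0.
    by rewrite sum0 linear0 scaler0 subrr.
  rewrite linearD linear_sum /= fus ?mem_head // scalerDr scaler_sumr.
  rewrite opprD addrACA subrr add0r -sumrB => E.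
  by rewrite -[RHS]E !big_seq; apply: eq_bigr => j jr; rewrite /vs fus ?inE ?jr ?orbT // scalerBl.
have us0 i : i \in r -> us i = 0.
  move=> ir; move/eqP: (vs0 i ir); rewrite scaler_eq0 subr_eq0 => /orP[/eqP|/eqP//].
  by move/th_inj; rewrite inE ir mem_head orbT => /(_ isT isT) ik; rewrite -ik ir in kNr.
move=> i; rewrite inE => /predU1P[->|]; last exact: us0.
by move: sum0; rewrite big_seq big1 ?addr0.
Qed.

Lemma directv_sum_leigenspace (f : 'End(V)) (I : finType) (th : I -> K) :
  injective th -> directv (\sum_i leigenspace f (th i)).
Proof.
move=> th_inj; apply/directv_sum_independent => us Eus sum0 i _.
apply: (leigenvector_sum_eq0 (index_enum_uniq I)) => // [x y _ _|j _].
  exact: th_inj.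
exact: Eus.
Qed.

End LinearAlgebra.

Section Decomposition.
Variables (K : fieldType) (V : vectType K) (d : nat) (U : nat -> {vspace V}).
Hypothesis U_direct : directv (\sum_(i < d.+1) U i).
Hypothesis U_full : (\sum_(i < d.+1) U i)%VS = fullv.

(* Indices beyond [d] are allowed: [slice l] and [proj l] vanish there. *)
Definition slice l : {vspace V} := if (l <= d)%N then U l else 0%VS.

Definition proj l : 'End(V) :=
  if (l <= d)%N then sumv_pi_for (esym U_full) (inord l : 'I_d.+1) else 0.

Lemma memv_proj l v : proj l v \in slice l.
Proof.
rewrite /proj /slice; case: leqP => ld; last by rewrite lfunE mem0v.
by have := memv_sum_pi (esym U_full) (inord l) v; rewrite inordK.
Qed.

Lemma memv_slice_out j u : (d < j)%N -> u \in slice j -> u = 0.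
Proof. by rewrite /slice ltnNge => /negbTE->; rewrite memv0 => /eqP. Qed.

Lemma proj_out l v : (d < l)%N -> proj l v = 0.
Proof. by rewrite /proj ltnNge => /negbTE->; rewrite lfunE. Qed.

Lemma sum_proj v : \sum_(i < d.+1) proj i v = v.
Proof.
rewrite -[RHS](sumv_pi_sum (esym U_full)) ?memvf //.
by apply: eq_bigr => i _; rewrite /proj -ltnS ltn_ord inord_val.
Qed.

Lemma proj_slice j u l : u \in slice j -> proj l u = if l == j then u else 0.
Proof.
move=> uj; have [dj|jd] := ltnP d j; first by rewrite (memv_slice_out dj uj) linear0 if_same.
have [dl|ld] := ltnP d l.
  by rewrite proj_out //; case: eqP => // lj; rewrite lj ltnNge jd in dl.
rewrite /slice jd in uj; rewrite -ltnS in jd; rewrite -ltnS in ld.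
pose us (i : 'I_d.+1) := if i == j :> nat then u else 0.
have Uus i : true -> us i \in U i by rewrite /us; case: eqP => [->|_] _; rewrite ?mem0v.
have Uproj (i : 'I_d.+1) : true -> proj i u \in U i.
  by have := memv_proj i u; rewrite /slice -ltnS ltn_ord.
have sum_us : \sum_(i < d.+1) us i = u.
  rewrite (bigD1 (Ordinal jd)) //= /us eqxx big1 ?addr0 // => i.
  by rewrite -(inj_eq val_inj) => /negbTE->.
have := directv_sum_unique U_direct (fun i => proj i u) us Uproj Uus.
by rewrite sum_us sum_proj eqxx => /esym/forall_inP/(_ (Ordinal ld) isT)/eqP.
Qed.

Lemma proj_idem j l v : proj l (proj j v) = if l == j then proj j v else 0.
Proof. exact/proj_slice/memv_proj. Qed.

Lemma proj_supp1 k v : (forall j, j != k -> proj j v = 0) -> proj k v = v.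
Proof.
move=> proj0; rewrite -[RHS]sum_proj; case: (leqP k d) => [kd|dk]; last first.
  rewrite proj_out // big1 // => i _; apply: proj0.
  by apply: contraTneq dk => <-; rewrite -leqNgt -ltnS.
rewrite -ltnS in kd; rewrite (bigD1 (Ordinal kd)) //= big1 ?addr0 // => i.
by rewrite -(inj_eq val_inj) => /proj0.
Qed.

Lemma proj_lfun (f : 'End(V)) l c v :
  (forall i, i != l -> proj l (f (proj i v)) = 0) ->
  proj l (f (proj l v)) = c *: proj l v ->
  proj l (f v) = c *: proj l v.
Proof.
move=> fi fl; case: (leqP l d) => [ld|dl]; last by rewrite !proj_out ?scaler0.
rewrite -ltnS in ld; rewrite -{1}[v]sum_proj !linear_sum (bigD1 (Ordinal ld)) //= fl.
by rewrite big1 ?addr0 // => i; rewrite -(inj_eq val_inj) => /fi.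
Qed.

Definition acts_by (Z : 'End(V)) (mu : nat -> K) :=
  forall j, (j <= d)%N -> forall u, u \in U j -> Z u = mu j *: u.

Definition raising (P : 'End(V)) (al : nat -> K) :=
  forall j u, u \in slice j -> P u - al j *: u \in slice j.+1.

Definition lowering (Q : 'End(V)) (be : nat -> K) :=
  forall j u, u \in slice j -> Q u - be j *: u \in (if j is i.+1 then slice i else 0%VS).

Lemma acts_by_slice Z mu j u : acts_by Z mu -> u \in slice j -> Z u = mu j *: u.
Proof.
rewrite /slice => ZU; case: leqP => [/ZU//|_]; first exact.
by rewrite memv0 => /eqP->; rewrite linear0 scaler0.
Qed.

Lemma proj_acts_by Z mu l v : acts_by Z mu -> proj l (Z v) = mu l *: proj l v.
Proof.
move=> ZU; apply: proj_lfun => [i il|];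
  rewrite (acts_by_slice ZU (memv_proj _ _)) linearZ /= proj_idem.
  by rewrite eq_sym (negbTE il) scaler0.
by rewrite eqxx.
Qed.

Lemma proj_raising P al l v : raising P al ->
  (forall k, l = k.+1 -> proj k v = 0) -> proj l (P v) = al l *: proj l v.
Proof.
move=> Praise below0.
have proj_P i : proj l (P (proj i v)) = al i *: proj l (proj i v).
  rewrite -[P _](subrK (al i *: proj i v)) linearD -[RHS]add0r.
  congr (_ + _); last exact: linearZ.
  apply: etrans (proj_slice l (Praise _ _ (memv_proj i v))) _.
  by case: eqP => // li; rewrite (below0 i li) linear0 scaler0 subrr.
apply: proj_lfun => [i il|]; rewrite proj_P proj_idem ?eqxx //.
by rewrite eq_sym (negbTE il) scaler0.
Qed.

Lemma proj_lowering Q be l v : lowering Q be ->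
  proj l.+1 v = 0 -> proj l (Q v) = be l *: proj l v.
Proof.
move=> Qlower above0.
have proj_Q i : proj l (Q (proj i v)) = be i *: proj l (proj i v).
  rewrite -[Q _](subrK (be i *: proj i v)) linearD -[RHS]add0r.
  congr (_ + _); last exact: linearZ.
  move: (Qlower _ _ (memv_proj i v)); case: i => [|i].
    by rewrite memv0 => /eqP->; rewrite linear0.
  move/(proj_slice l) => proj_rest; apply: etrans proj_rest _.
  by case: eqP => // <-; rewrite above0 linear0 scaler0 subrr.
apply: proj_lfun => [i il|]; rewrite proj_Q proj_idem ?eqxx //.
by rewrite eq_sym (negbTE il) scaler0.
Qed.

Section Tridiagonal.
Variables (Z P Q : 'End(V)) (al be : nat -> K) (c c' g g' : K).
Hypothesis P_raising : raising P al.
Hypothesis Q_lowering : lowering Q be.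
Hypothesis PZ_rel : forall v, P (Z v) - c *: Z (P v) = g *: v.
Hypothesis QZ_rel : forall v, Q (Z v) - c' *: Z (Q v) = g' *: v.
Hypothesis al_gap : forall i s, (2 <= s <= i)%N -> al (i - s) != c * al i.
Hypothesis be_gap : forall i s, (2 <= s)%N -> be (i + s) != c' * be i.

(* Project the relation for [Q] onto slice [i + s]; by downward induction on [s]
   the only surviving term is [(be (i + s) - c' * be i) *: proj (i + s) (Z u)]. *)
Lemma proj_far_above s i u : (2 <= s)%N -> u \in slice i -> proj (i + s) (Z u) = 0.
Proof.
move=> s2; move: {2}(d.+1 - s)%N (leqnn (d.+1 - s)) => n.
elim: n s s2 i u => [|n IHn] s s2 i u sn ui.
  by rewrite proj_out //; lia.
have {}IHn j w : w \in slice j -> proj (j + s.+1) (Z w) = 0.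
  by apply: IHn; lia.
set l := (i + s)%N.
have r_mem : Q u - be i *: u \in (if i is k.+1 then slice k else 0%VS) by exact: Q_lowering.
have proj_Zr : proj l (Z (Q u - be i *: u)) = 0.
  move: r_mem; case: (i) @l => [|k] l; first by rewrite memv0 => /eqP->; rewrite !linear0.
  by move/IHn; rewrite /l addSnnS.
have := congr1 (proj l) (QZ_rel u).
rewrite linearB !linearZ /= (proj_slice l ui) ifN_eq; last by rewrite /l; lia.
rewrite (proj_lowering Q_lowering); last by rewrite /l -addnS; exact: IHn.
have -> : proj l (Z (Q u)) = be i *: proj l (Z u).
  have -> : Q u = be i *: u + (Q u - be i *: u) by rewrite addrC subrK.
  by rewrite linearD linearD /= proj_Zr addr0 !linearZ.
rewrite scalerN scalerA -scalerBl scaler0 => /eqP; rewrite scaler_eq0 subr_eq0.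
by rewrite (negbTE (be_gap i s2)) => /eqP.
Qed.

Lemma proj_far_below s i u : (2 <= s <= i)%N -> u \in slice i -> proj (i - s) (Z u) = 0.
Proof.
move=> si; move: {2}(d.+1 - s)%N (leqnn (d.+1 - s)) => n.
elim: n s i si u => [|n IHn] s i si u sn ui.
  by move: ui; rewrite /slice ifN; [rewrite memv0 => /eqP->; rewrite !linear0 | lia].
have {}IHn j w : (s.+1 <= j)%N -> w \in slice j -> proj (j - s.+1) (Z w) = 0.
  by move=> sj; apply: IHn; lia.
set l := (i - s)%N.
have proj_Zr : proj l (Z (P u - al i *: u)) = 0.
  by rewrite /l -subSS; apply: IHn; [lia | exact: P_raising].
have := congr1 (proj l) (PZ_rel u).
rewrite linearB !linearZ /= (proj_slice l ui) ifN_eq; last by rewrite /l; lia.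
rewrite (proj_raising P_raising); last first.
  move=> k; rewrite /l => lk; have -> : k = (i - s.+1)%N by lia.
  by apply: IHn => //; lia.
have -> : proj l (Z (P u)) = al i *: proj l (Z u).
  have -> : P u = al i *: u + (P u - al i *: u) by rewrite addrC subrK.
  by rewrite linearD linearD /= proj_Zr addr0 !linearZ.
rewrite scalerN scalerA -scalerBl scaler0 => /eqP; rewrite scaler_eq0 subr_eq0.
by rewrite (negbTE (al_gap si)) => /eqP.
Qed.

Lemma tridiagonal_action i u : u \in slice i -> Z u \in (slice i.-1 + slice i + slice i.+1)%VS.
Proof.
move=> ui; rewrite -[Z u]sum_proj; apply: rpred_sum => l _.
have [il|li2] := leqP (i + 2) l.
  by rewrite -(subnKC (leq_trans (leq_addr 2 i) il)) proj_far_above ?mem0v //; lia.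
have [li|il2] := leqP (l + 2) i.
  by rewrite -[nat_of_ord l](subKn (leq_trans (leq_addr 2 l) li)) proj_far_below ?mem0v //; lia.
have : nat_of_ord l \in [:: i.-1; i; i.+1] by rewrite !inE; lia.
rewrite !inE => /or3P[] /eqP li; move: (memv_proj l (Z u)); rewrite li => proj_mem.
- exact: subvP (subv_trans (addvSl _ _) (addvSl _ _)) _ proj_mem.
- exact: subvP (subv_trans (addvSr _ _) (addvSl _ _)) _ proj_mem.
- exact: subvP (addvSr _ _) _ proj_mem.
Qed.

End Tridiagonal.

Definition lower i := (\sum_(l < d.+1 | (l < i)%N) U l)%VS.
Definition upper i := (\sum_(l < d.+1 | (i <= l)%N) U l)%VS.

Lemma lower_cap_upper i : (lower i :&: upper i = 0)%VS.
Proof.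
rewrite /upper (eq_bigl (fun l : 'I_d.+1 => ~~ (l < i)%N)) => [|l]; last by rewrite -leqNgt.
exact: directv_sum_capC.
Qed.

Section Diagonal.
Variables (Z : 'End(V)) (mu : nat -> K).
Hypothesis Z_acts : acts_by Z mu.
Hypothesis mu_inj : {in [pred i | (i <= d)%N] &, injective mu}.

Lemma scale_proj_eigen t v l : Z v = t *: v -> (mu l - t) *: proj l v = 0.
Proof. by move=> Zv; rewrite scalerBl -(proj_acts_by _ _ Z_acts) Zv linearZ subrr. Qed.

Lemma leigenspace_acts_by i : (i <= d)%N -> leigenspace Z (mu i) = U i.
Proof.
move=> id; apply/vspaceP => v; rewrite memv_leigenspace.
apply/eqP/idP => [/scale_proj_eigen mu_v|]; last exact: Z_acts.
have <- : proj i v = v.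
  apply: proj_supp1 => j ji; have [jd|dj] := leqP j d; last exact: proj_out.
  move/eqP: (mu_v j); rewrite scaler_eq0 subr_eq0 => /orP[/eqP/mu_inj|/eqP//].
  by rewrite !inE => /(_ jd id) ij; rewrite ij eqxx in ji.
by have := memv_proj i v; rewrite /slice id.
Qed.

Lemma leigenspace_acts_by_eq0 t :
  (forall i, (i <= d)%N -> t != mu i) -> leigenspace Z t = 0%VS.
Proof.
move=> t_mu; apply/vspaceP => v; rewrite memv_leigenspace memv0.
apply/eqP/eqP => [/scale_proj_eigen mu_v|->]; last by rewrite linear0 scaler0.
rewrite -[v]sum_proj; apply: big1 => i _; have id : (i <= d)%N by rewrite -ltnS.
move/eqP: (mu_v i); rewrite scaler_eq0 subr_eq0 eq_sym (negbTE (t_mu i id)).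
by move/eqP.
Qed.

Lemma diagonalizable_acts_by : diagonalizable Z.
Proof.
exists [seq mu i | i <- iota 0 d.+1].
rewrite big_map -[iota 0 d.+1]/(index_iota 0 d.+1) big_mkord -[RHS]U_full.
by apply: eq_bigr => i _; rewrite leigenspace_acts_by // -ltnS.
Qed.

Lemma standard_ordering_acts_by (Z' : 'End(V)) :
  (forall i, (i <= d)%N -> U i != 0%VS) ->
  (forall i u, u \in slice i -> Z' u \in (slice i.-1 + slice i + slice i.+1)%VS) ->
  standard_ordering Z Z' d mu.
Proof.
move=> U_neq0 Z'_tri.
have eigsp_slice i : eigsp Z d mu i = slice i.
  by rewrite /eigsp /slice; case: ifP => // /leigenspace_acts_by.
split.
- rewrite map_inj_in_uniq ?iota_uniq // => i j; rewrite !mem_iota !add0n !ltnS.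
  by move=> /andP[_ id] /andP[_ jd]; apply: mu_inj.
- by move=> i id; rewrite /leigenvalue leigenspace_acts_by ?U_neq0.
- move=> t; have [/existsP[i /eqP->] _|/existsPn t_mu] := boolP [exists i : 'I_d.+1, t == mu i].
    by exists i; rewrite // -ltnS.
  rewrite /leigenvalue leigenspace_acts_by_eq0 ?eqxx // => i id.
  by have := t_mu (inord i); rewrite inordK.
- move=> i _; rewrite !eigsp_slice; apply/subvP => _ /memv_imgP[u ui ->].
  exact: Z'_tri.
Qed.

(* Subtracting [mu k] times a vector kills its [k]-th component and rescales the others
   by nonzero factors. *)
Lemma memv_proj_invariant (W : {vspace V}) l w :
  (Z @: W <= W)%VS -> w \in W -> proj l w \in W.
Proof.
move=> ZW; have ZWw x : x \in W -> Z x \in W by move=> xW; apply/(subvP ZW)/memv_img.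
suff proj_inW k x : x \in W -> (forall j, (k <= j)%N -> proj j x = 0) ->
    forall j, proj j x \in W.
  by move=> wW; apply: (proj_inW d.+1) => // j /proj_out.
elim: k x => [|k IHk] x xW x_above j; first by rewrite x_above ?mem0v.
have [dk|kd] := ltnP d k.
  apply: IHk => // i ki; have [->|/eqP ik] := eqVneq i k; first exact: proj_out.
  by apply: x_above; lia.
pose y := Z x - mu k *: x.
have proj_y i : proj i y = (mu i - mu k) *: proj i x.
  by rewrite linearB linearZ /= (proj_acts_by _ _ Z_acts) scalerBl.
have yW : y \in W by rewrite rpredB ?rpredZ ?ZWw.
have proj_xW i : i != k -> proj i x \in W.
  move=> ik; have [id|di] := leqP i d; last by rewrite proj_out ?mem0v.
  have mu_ik : mu i - mu k != 0.
    by rewrite subr_eq0; apply: contra ik => /eqP/mu_inj; rewrite !inE => /(_ id kd)->.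
  have := rpredZ (mu i - mu k)^-1 (IHk y yW _ i); rewrite proj_y scalerA mulVf // scale1r.
  apply=> m km; rewrite proj_y; have [->|mk] := eqVneq m k; first by rewrite subrr scale0r.
  by rewrite x_above ?scaler0 //; lia.
have [->|/proj_xW//] := eqVneq j k.
have -> : proj k x = x - \sum_(i < d.+1 | i != k :> nat) proj i x.
  rewrite -ltnS in kd.
  by rewrite -{2}[x]sum_proj (bigD1 (Ordinal kd)) //= addrK.
by rewrite rpredB // rpred_sum // => i /proj_xW.
Qed.

Lemma invariant_lower_upper (W : {vspace V}) i : (Z @: W <= W)%VS ->
  ((W :&: lower i) + (W :&: upper i) = W)%VS /\
  ((W :&: lower i) :&: (W :&: upper i) = 0)%VS.
Proof.
move=> ZW; split; last first.
  by apply/eqP; rewrite -subv0 -(lower_cap_upper i) capvS ?capvSr.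
apply/eqP; rewrite eqEsubv subv_add !capvSl /=; apply/subvP => w wW.
have projW l : proj l w \in W by apply: memv_proj_invariant.
have projU (l : 'I_d.+1) : proj l w \in U l by have := memv_proj l w; rewrite /slice -ltnS ltn_ord.
rewrite -[w]sum_proj (bigID (fun l : 'I_d.+1 => (l < i)%N)) /=.
under [X in _ + X]eq_bigl => l do rewrite -leqNgt.
by apply: memv_add; rewrite memv_cap rpred_sum //=; apply: memv_sumr => l _; apply: projU.
Qed.

End Diagonal.

Section WeylRelation.
Variables (Z P : 'End(V)) (mu al : nat -> K) (c kap : K).
Hypothesis c_neq0 : c != 0.
Hypothesis Z_acts : acts_by Z mu.
Hypothesis al_mu : forall j, (j <= d)%N -> al j * mu j = kap.

Lemma weyl_relation :
  (forall j u, (j <= d)%N -> u \in U j ->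
     Z (P u - al j *: u) = (c^-1 * mu j) *: (P u - al j *: u)) ->
  forall v, P (Z v) - c *: Z (P v) = ((1 - c) * kap) *: v.
Proof.
move=> Z_shift v; apply/eqP; rewrite -subr_eq0.
pose W := (P \o Z - c *: (Z \o P) - ((1 - c) * kap) *: \1)%VF.
have -> : P (Z v) - c *: Z (P v) - ((1 - c) * kap) *: v = W v by rewrite !lfun_simp.
suff W_proj i : W (proj i v) = 0.
  by rewrite -[v]sum_proj linear_sum big1 // => i _; apply: W_proj.
have ui : proj i v \in slice i := memv_proj i v.
have [id|di] := leqP i d; last by rewrite proj_out ?linear0.
rewrite /slice id in ui; set u := proj i v in ui *.
rewrite /W !lfun_simp /= (Z_acts id ui) linearZ /=.
have Pu : P u = al i *: u + (P u - al i *: u) by rewrite addrC subrK.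
rewrite {2}Pu linearD /= [Z (al i *: u)]linearZ /= (Z_acts id ui) (Z_shift _ _ id ui).
rewrite {1}Pu -(al_mu id).
rewrite !scalerDr !scalerA mulrA mulfV // mul1r opprD addrACA subrr addr0 -!scalerBl.
by rewrite [_ - _](_ : _ = 0) ?scale0r //; ring.
Qed.

Lemma weyl_relation_raising :
  raising P al -> (forall j, (j < d)%N -> mu j.+1 = c^-1 * mu j) ->
  forall v, P (Z v) - c *: Z (P v) = ((1 - c) * kap) *: v.
Proof.
move=> P_raising mu_shift; apply: weyl_relation => j u jd uj.
have : u \in slice j by rewrite /slice jd.
move/P_raising; rewrite /slice; case: ltnP => [jd' r_mem|_].
  by rewrite (Z_acts jd' r_mem) mu_shift.
by rewrite memv0 => /eqP->; rewrite linear0 scaler0.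
Qed.

Lemma weyl_relation_lowering :
  lowering P al -> (forall j, (j < d)%N -> mu j = c^-1 * mu j.+1) ->
  forall v, P (Z v) - c *: Z (P v) = ((1 - c) * kap) *: v.
Proof.
move=> P_lowering mu_shift; apply: weyl_relation => j u jd uj.
have : u \in slice j by rewrite /slice jd.
move/P_lowering; case: j jd {uj} => [|j] jd.
  by rewrite memv0 => /eqP->; rewrite linear0 scaler0.
by rewrite /slice ltnW // => r_mem; rewrite (Z_acts (ltnW jd) r_mem) mu_shift.
Qed.

End WeylRelation.

End Decomposition.

Section EigenspaceFlags.
Variables (K : fieldType) (V : vectType K) (f g : 'End(V)) (d : nat) (th : nat -> K).
Hypothesis f_std : standard_ordering f g d th.

Definition eigsum (P : pred nat) := (\sum_(j < d.+1 | P j) leigenspace f (th j))%VS.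

Lemma standard_ordering_inj : {in [pred i | (i <= d)%N] &, injective th}.
Proof.
case: f_std => /uniqP th_uniq _ _ _ i j id jd th_ij.
have := th_uniq 0 i j; rewrite size_map size_iota !inE !(nth_map 0) ?size_iota ?ltnS //.
by rewrite !nth_iota ?ltnS // !add0n; apply.
Qed.

Lemma leigenspace_sub_eigsum (P : pred nat) k :
  (k <= d)%N -> P k -> (leigenspace f (th k) <= eigsum P)%VS.
Proof. by rewrite -ltnS => kd Pk; apply: (sumv_sup (Ordinal kd)). Qed.

Lemma eigsumS (P P' : pred nat) :
  (forall j, (j <= d)%N -> P j -> P' j) -> (eigsum P <= eigsum P')%VS.
Proof.
move=> PP'; apply/subv_sumP => j Pj; have jd : (j <= d)%N by rewrite -ltnS.
exact: leigenspace_sub_eigsum jd (PP' j jd Pj).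
Qed.

Lemma eigsum_eq0 (P : pred nat) : (forall j, (j <= d)%N -> ~~ P j) -> eigsum P = 0%VS.
Proof.
move=> notP; apply/eqP; rewrite -subv0; apply/subv_sumP => j Pj.
by have := notP j; rewrite -ltnS ltn_ord Pj => /(_ isT).
Qed.

Lemma memv_eigsum_sub (P : pred nat) k v :
  v \in eigsum P -> f v - th k *: v \in eigsum [pred j | P j & j != k].
Proof.
move=> /memv_sumP[vs Evs ->]; rewrite linear_sum /= scaler_sumr -sumrB.
apply: rpred_sum => j Pj; move: (Evs j Pj); rewrite memv_leigenspace => /eqP->.
rewrite -scalerBl; have [->|jk] := eqVneq (nat_of_ord j) k.
  by rewrite subrr scale0r mem0v.
have jd : (j <= d)%N by rewrite -ltnS.
have Pj' : [pred j | P j & j != k] j by rewrite /= Pj jk.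
by apply/rpredZ/(subvP (leigenspace_sub_eigsum jd Pj')); exact: Evs.
Qed.

Lemma memv_eigsum_adjacent (P P' : pred nat) v :
  (forall j j', (j <= d)%N -> (j' <= d)%N -> P j -> j' \in [:: j.-1; j; j.+1] -> P' j') ->
  v \in eigsum P -> g v \in eigsum P'.
Proof.
move=> PP' /memv_sumP[vs Evs ->]; rewrite linear_sum /=; apply: rpred_sum => j Pj.
have jd : (j <= d)%N by rewrite -ltnS.
have eigsp_sub (j' : nat) : j' \in [:: j.-1; j : nat; j.+1] -> (eigsp f d th j' <= eigsum P')%VS.
  rewrite /eigsp; case: ifP => j'd j'j; last exact: sub0v.
  exact/leigenspace_sub_eigsum/(PP' j).
have [_ _ _ /(_ j jd) g_tri] := f_std.
have g_vj : g (vs j) \in (eigsp f d th j.-1 + eigsp f d th j + eigsp f d th j.+1)%VS.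
  by apply/(subvP g_tri)/memv_img; rewrite /eigsp jd; exact: Evs.
by apply: subvP g_vj; rewrite !subv_add !eigsp_sub // !inE eqxx ?orbT.
Qed.

Lemma eigsum_capC (P : pred nat) : (eigsum P :&: eigsum (predC P) = 0)%VS.
Proof.
apply: (directv_sum_capC (fun j : 'I_d.+1 => P j)).
apply: directv_sum_leigenspace => i j /standard_ordering_inj ij.
by apply/val_inj/ij; rewrite inE -ltnS.
Qed.

Lemma eigsum_lt_cap_geq k : (eigsum (fun j => j < k)%N :&: eigsum (fun j => k <= j)%N = 0)%VS.
Proof.
apply/eqP; rewrite -subv0 -(eigsum_capC (fun j => j < k)%N) capvS // eigsumS // => j _ /=.
by rewrite -leqNgt.
Qed.

Lemma eigsum_cap_leq_geq k : (k <= d)%N ->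
  (eigsum (fun j => j <= k)%N :&: eigsum (fun j => k <= j)%N <= leigenspace f (th k))%VS.
Proof.
move=> kd; apply/subvP => v /memv_capP[v_le v_ge].
have eigsum_le : eigsum (fun j => j <= k)%N = (leigenspace f (th k) + eigsum (fun j => j < k)%N)%VS.
  rewrite -ltnS in kd; rewrite /eigsum (bigD1 (Ordinal kd)) //=; congr (_ + _)%VS.
  by apply: eq_bigl => j; rewrite -(inj_eq val_inj) /= ltn_neqAle andbC.
move: v_le v_ge; rewrite eigsum_le => /memv_addP[e e_mem [x x_lt ->]] v_ge.
suff -> : x = 0 by rewrite addr0.
apply/eqP; rewrite -memv0 -(eigsum_lt_cap_geq k) memv_cap x_lt.
have -> : x = (e + x) - e by rewrite addrC addKr.
by rewrite memvB // (subvP (leigenspace_sub_eigsum kd _)).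
Qed.

(* By induction on [k], [f] maps [W :&: eigsum (j <= k)] into [W]: the splitting of [W]
   at [k] peels off a vector of [W] in the eigenspace for [th k]. *)
Lemma flag_split_invariant (W : {vspace V}) :
  (fullv <= eigsum predT)%VS ->
  (forall k, (1 <= k <= d)%N ->
     (W <= (W :&: eigsum (fun j => j < k)%N) + (W :&: eigsum (fun j => k <= j)%N))%VS) ->
  (f @: W <= W)%VS.
Proof.
move=> f_diag W_split.
have fW k : (k <= d)%N -> forall w, w \in W -> w \in eigsum (fun j => j <= k)%N -> f w \in W.
  elim: k => [|k IHk] kd w wW w_le.
    have : w \in leigenspace f (th 0).
      apply: (subvP (eigsum_cap_leq_geq (leq0n d))); rewrite memv_cap w_le.
      by apply: (subvP (eigsumS _)) w_le.
    by rewrite memv_leigenspace => /eqP->; rewrite rpredZ.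
  have /memv_addP[x x_mem [y y_mem w_xy]] := subvP (W_split k.+1 kd) w wW.
  move: x_mem y_mem; rewrite !memv_cap => /andP[xW x_lt] /andP[yW y_ge].
  have y_eig : y \in leigenspace f (th k.+1).
    apply: (subvP (eigsum_cap_leq_geq kd)); rewrite memv_cap y_ge andbT.
    have -> : y = w - x by rewrite w_xy addrC addKr.
    by rewrite memvB //; apply: (subvP (eigsumS _)) x_lt => j _ /ltnW.
  have fyW : f y \in W by move: y_eig; rewrite memv_leigenspace => /eqP->; exact: rpredZ.
  by rewrite w_xy linearD rpredD // (IHk (ltnW kd)).
apply/subvP => _ /memv_imgP[w wW ->]; apply: (fW d) => //.
by apply: (subvP (eigsumS _)) (subvP f_diag w (memvf w)) => j jd.
Qed.

End EigenspaceFlags.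

Arguments eigsumS {K V f d th P P'}.
Arguments eigsum_eq0 {K V f d th P}.

Lemma cross_complements (K : fieldType) (V : vectType K) (W P Q P' Q' : {vspace V}) :
  (P + Q = W)%VS -> (P :&: Q = 0)%VS -> (P' + Q' = W)%VS -> (P' :&: Q' = 0)%VS ->
  (P :&: P' = 0)%VS -> (Q :&: Q' = 0)%VS -> (Q + Q' = W)%VS /\ (P + P' = W)%VS.
Proof.
move=> PQ PQ0 PQ' PQ0' PP0 QQ0.
have dimPQ := dimv_disjoint_sum PQ0; have dimPQ' := dimv_disjoint_sum PQ0'.
rewrite PQ in dimPQ; rewrite PQ' in dimPQ'.
have [PW QW] : (P <= W)%VS /\ (Q <= W)%VS by rewrite -PQ addvSl addvSr.
have [P'W Q'W] : (P' <= W)%VS /\ (Q' <= W)%VS by rewrite -PQ' addvSl addvSr.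
have dimPP' : (\dim P + \dim P' <= \dim W)%N.
  by rewrite -(dimv_disjoint_sum PP0) dimvS // subv_add PW P'W.
have dimQQ' : (\dim Q + \dim Q' <= \dim W)%N.
  by rewrite -(dimv_disjoint_sum QQ0) dimvS // subv_add QW Q'W.
split; apply/eqP; rewrite eqEdim subv_add ?QW ?Q'W ?PW ?P'W /=.
  by rewrite (dimv_disjoint_sum QQ0); lia.
by rewrite (dimv_disjoint_sum PP0); lia.
Qed.

Section QPowers.
Variables (K : fieldType) (q : K).

Lemma qexp_subn i d : (i <= d)%N -> qexp q (d - i) d = qexp_rev q i d.
Proof. by move=> id; rewrite /qexp /qexp_rev; apply: f_equal; lia. Qed.

Lemma qexp_rev_subn i d : (i <= d)%N -> qexp_rev q (d - i) d = qexp q i d.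
Proof. by move=> id; rewrite /qexp /qexp_rev; apply: f_equal; lia. Qed.

Hypothesis q_neq0 : q != 0.
Hypothesis q_not_root1 : forall n : nat, (0 < n)%N -> q ^+ n != 1.

Lemma expfz_eq1 (z : int) : q ^ z = 1 -> z = 0.
Proof.
have q_pow1 n : q ^+ n.+1 <> 1 by move/eqP; apply/negP/q_not_root1.
case: z => n; first by case: n => // n /q_pow1.
by rewrite NegzE -invr_expz => /(congr1 GRing.inv); rewrite invrK invr1 => /q_pow1.
Qed.

Lemma mulr_expfz_inj (x : K) (m n : int) : x != 0 -> x * q ^ m = x * q ^ n -> m = n.
Proof.
move=> x_neq0 /(mulfI x_neq0) qmn; apply/eqP; rewrite -subr_eq0; apply/eqP/expfz_eq1.
by rewrite expfzDr // qmn -expfzDr // subrr expr0z.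
Qed.

Lemma mulr_expfz_neq (x : K) (k m n : int) :
  x != 0 -> m != k + n -> x * q ^ m != q ^ k * (x * q ^ n).
Proof.
move=> x_neq0; apply: contra => /eqP; rewrite mulrCA -expfzDr //.
by move/(mulr_expfz_inj x_neq0)->.
Qed.

Lemma qexpSn i d : qexp q i.+1 d = q ^ 2 * qexp q i d.
Proof. by rewrite /qexp -expfzDr //; apply: f_equal; lia. Qed.

Lemma qexp_revSn i d : qexp_rev q i.+1 d = q ^ (-2) * qexp_rev q i d.
Proof. by rewrite /qexp_rev -expfzDr //; apply: f_equal; lia. Qed.

Lemma qexp_qexp_rev i d : qexp q i d * qexp_rev q i d = 1.
Proof. by rewrite /qexp /qexp_rev -expfzDr // -(expr0z q); apply: f_equal; lia. Qed.

End QPowers.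

Section SplitDecompositions.
Variables (K : fieldType) (V : vectType K) (q : K) (A As : 'End(V)) (d : nat) (a as_ : K).
Hypothesis A_std : standard_ordering A As d (fun i => a * qexp q i d).
Hypothesis As_std : standard_ordering As A d (fun i => as_ * qexp_rev q i d).
Local Notation SA := (eigsum A d (fun i => a * qexp q i d)).
Local Notation SS := (eigsum As d (fun i => as_ * qexp_rev q i d)).
Variables U U' : nat -> {vspace V}.
Hypothesis U_def : forall i, (i <= d)%N ->
  U i = (SS (fun j => j <= i)%N :&: SA (fun j => j <= d - i)%N)%VS.
Hypothesis U'_def : forall i, (i <= d)%N ->
  U' i = (SS (fun j => d - i <= j)%N :&: SA (fun j => i <= j)%N)%VS.

Lemma memv_U l u : (l <= d)%N ->
  (u \in U l) = (u \in SS (fun j => j <= l)%N) && (u \in SA (fun j => j <= d - l)%N).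
Proof. by move=> ld; rewrite U_def // memv_cap. Qed.

Lemma memv_U' l u : (l <= d)%N ->
  (u \in U' l) = (u \in SS (fun j => d - l <= j)%N) && (u \in SA (fun j => l <= j)%N).
Proof. by move=> ld; rewrite U'_def // memv_cap. Qed.

Lemma A_raising_U : raising d U A (fun l => a * qexp_rev q l d).
Proof.
move=> l u; have [dl /memv_slice_out->//|ld] := ltnP d l.
  by rewrite linear0 scaler0 subrr mem0v.
rewrite /slice ld memv_U // => /andP[u_SS u_SA].
have r_SS : A u - (a * qexp_rev q l d) *: u \in SS (fun j => j <= l.+1)%N.
  apply: memvB; last by apply/memvZ; apply: (subvP (eigsumS _)) u_SS => j _ /=; lia.
  by apply: (memv_eigsum_adjacent As_std) u_SS => j j' _ _ /=; rewrite !inE; lia.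
have := memv_eigsum_sub (d - l) u_SA; rewrite qexp_subn // => r_SA.
case: ltnP => [ld'|dl]; last first.
  by move: r_SA; rewrite eigsum_eq0 // => j _ /=; lia.
by rewrite memv_U // r_SS; apply: (subvP (eigsumS _)) r_SA => j _ /=; lia.
Qed.

Lemma As_lowering_U : lowering d U As (fun l => as_ * qexp_rev q l d).
Proof.
move=> l u; have [dl /memv_slice_out->//|ld] := ltnP d l.
  by rewrite linear0 scaler0 subrr; case: (l) => [|k]; rewrite mem0v.
rewrite /slice ld memv_U // => /andP[u_SS u_SA].
have r_SS := memv_eigsum_sub l u_SS.
have r_SA : As u - (as_ * qexp_rev q l d) *: u \in SA (fun j => j <= (d - l).+1)%N.
  apply: memvB; last by apply/memvZ; apply: (subvP (eigsumS _)) u_SA => j _ /=; lia.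
  by apply: (memv_eigsum_adjacent A_std) u_SA => j j' _ _ /=; rewrite !inE; lia.
case: l ld u_SS u_SA r_SS r_SA => [|l] ld _ _ r_SS r_SA.
  by move: r_SS; rewrite eigsum_eq0 // => j _ /=; lia.
rewrite /slice (ltnW ld) memv_U ?(ltnW ld) //.
by apply/andP; split;
  [apply: (subvP (eigsumS _)) r_SS | apply: (subvP (eigsumS _)) r_SA] => j _ /=; lia.
Qed.

Lemma A_raising_U' : raising d U' A (fun l => a * qexp q l d).
Proof.
move=> l u; have [dl /memv_slice_out->//|ld] := ltnP d l.
  by rewrite linear0 scaler0 subrr mem0v.
rewrite /slice ld memv_U' // => /andP[u_SS u_SA].
have r_SA := memv_eigsum_sub l u_SA.
have r_SS : A u - (a * qexp q l d) *: u \in SS (fun j => d - l.+1 <= j)%N.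
  apply: memvB; last by apply/memvZ; apply: (subvP (eigsumS _)) u_SS => j _ /=; lia.
  by apply: (memv_eigsum_adjacent As_std) u_SS => j j' _ _ /=; rewrite !inE; lia.
case: ltnP => [ld'|dl]; last first.
  by move: r_SA; rewrite eigsum_eq0 // => j jd /=; lia.
by rewrite memv_U' // r_SS; apply: (subvP (eigsumS _)) r_SA => j _ /=; lia.
Qed.

Lemma As_lowering_U' : lowering d U' As (fun l => as_ * qexp q l d).
Proof.
move=> l u; have [dl /memv_slice_out->//|ld] := ltnP d l.
  by rewrite linear0 scaler0 subrr; case: (l) => [|k]; rewrite mem0v.
rewrite /slice ld memv_U' // => /andP[u_SS u_SA].
have := memv_eigsum_sub (d - l) u_SS; rewrite qexp_rev_subn // => r_SS.
have r_SA : As u - (as_ * qexp q l d) *: u \in SA (fun j => l.-1 <= j)%N.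
  apply: memvB; last by apply/memvZ; apply: (subvP (eigsumS _)) u_SA => j _ /=; lia.
  by apply: (memv_eigsum_adjacent A_std) u_SA => j j' _ _ /=; rewrite !inE; lia.
case: l ld u_SS u_SA r_SS r_SA => [|l] ld _ _ r_SS r_SA.
  by move: r_SS; rewrite eigsum_eq0 // => j jd /=; lia.
rewrite /slice (ltnW ld) memv_U' ?(ltnW ld) //.
by apply/andP; split;
  [apply: (subvP (eigsumS _)) r_SS | apply: (subvP (eigsumS _)) r_SA] => j _ /=; lia.
Qed.

Hypothesis q_neq0 : q != 0.
Hypothesis q_not_root1 : forall n : nat, (0 < n)%N -> q ^+ n != 1.
Hypotheses (a_neq0 : a != 0) (as_neq0 : as_ != 0).
Hypothesis U_direct : directv (\sum_(i < d.+1) U i).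
Hypothesis U_full : (\sum_(i < d.+1) U i)%VS = fullv.
Hypothesis U'_direct : directv (\sum_(i < d.+1) U' i).
Hypothesis U'_full : (\sum_(i < d.+1) U' i)%VS = fullv.
Variables (b bs : K) (B Bs : 'End(V)).
Hypothesis B_acts : acts_by d U B (fun i => b * qexp q i d).
Hypothesis Bs_acts : acts_by d U' Bs (fun i => bs * qexp_rev q i d).

Lemma weyl_A_Bs v : A (Bs v) - q ^ 2 *: Bs (A v) = ((1 - q ^ 2) * (a * bs)) *: v.
Proof.
apply: (weyl_relation_raising U'_full (expfz_neq0 _ q_neq0)
   Bs_acts _ A_raising_U') => [j _|j _].
  by rewrite mulrACA qexp_qexp_rev ?mulr1.
by rewrite invr_expz qexp_revSn // mulrCA.
Qed.

Lemma weyl_As_Bs v : As (Bs v) - q ^ (-2) *: Bs (As v) = ((1 - q ^ (-2)) * (as_ * bs)) *: v.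
Proof.
apply: (weyl_relation_lowering U'_full (expfz_neq0 _ q_neq0)
   Bs_acts _ As_lowering_U') => [j _|j _].
  by rewrite mulrACA qexp_qexp_rev ?mulr1.
rewrite invr_expz opprK qexp_revSn // [RHS]mulrCA [q ^ 2 * _]mulrA -expfzDr //.
by rewrite addrN expr0z mul1r.
Qed.

Lemma weyl_A_B v : A (B v) - q ^ (-2) *: B (A v) = ((1 - q ^ (-2)) * (a * b)) *: v.
Proof.
apply: (weyl_relation_raising U_full (expfz_neq0 _ q_neq0)
   B_acts _ A_raising_U) => [j _|j _].
  by rewrite mulrACA [qexp_rev _ _ _ * _]mulrC qexp_qexp_rev ?mulr1.
by rewrite invr_expz opprK qexpSn // mulrCA.
Qed.

Lemma weyl_As_B v : As (B v) - q ^ 2 *: B (As v) = ((1 - q ^ 2) * (as_ * b)) *: v.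
Proof.
apply: (weyl_relation_lowering U_full (expfz_neq0 _ q_neq0)
   B_acts _ As_lowering_U) => [j _|j _].
  by rewrite mulrACA [qexp_rev _ _ _ * _]mulrC qexp_qexp_rev ?mulr1.
rewrite invr_expz qexpSn // [RHS]mulrCA [q ^ (-2) * _]mulrA -expfzDr //.
by rewrite addNr expr0z mul1r.
Qed.

Lemma Bs_tridiagonal_U i u : u \in slice d U i ->
  Bs u \in (slice d U i.-1 + slice d U i + slice d U i.+1)%VS.
Proof.
apply: (tridiagonal_action U_direct U_full A_raising_U As_lowering_U weyl_A_Bs weyl_As_Bs).
  by move=> j s /andP[s2 sj]; rewrite /qexp_rev mulr_expfz_neq //; apply/eqP; lia.
by move=> j s s2; rewrite /qexp_rev mulr_expfz_neq //; apply/eqP; lia.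
Qed.

Lemma B_tridiagonal_U' i u : u \in slice d U' i ->
  B u \in (slice d U' i.-1 + slice d U' i + slice d U' i.+1)%VS.
Proof.
apply: (tridiagonal_action U'_direct U'_full A_raising_U' As_lowering_U' weyl_A_B weyl_As_B).
  by move=> j s /andP[s2 sj]; rewrite /qexp mulr_expfz_neq //; apply/eqP; lia.
by move=> j s s2; rewrite /qexp mulr_expfz_neq //; apply/eqP; lia.
Qed.

Hypotheses (b_neq0 : b != 0) (bs_neq0 : bs != 0).
Hypotheses (U_neq0 : forall i, (i <= d)%N -> U i != 0%VS).
Hypotheses (U'_neq0 : forall i, (i <= d)%N -> U' i != 0%VS).

Lemma B_eigenvalue_inj : {in [pred i | (i <= d)%N] &, injective (fun i => b * qexp q i d)}.
Proof. by move=> i j _ _ /(mulr_expfz_inj q_neq0 q_not_root1 b_neq0) ij; lia. Qed.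

Lemma Bs_eigenvalue_inj : {in [pred i | (i <= d)%N] &, injective (fun i => bs * qexp_rev q i d)}.
Proof. by move=> i j _ _ /(mulr_expfz_inj q_neq0 q_not_root1 bs_neq0) ij; lia. Qed.

Lemma standard_ordering_B : standard_ordering B Bs d (fun i => b * qexp q i d).
Proof.
exact: (standard_ordering_acts_by U_direct U_full B_acts B_eigenvalue_inj U_neq0 Bs_tridiagonal_U).
Qed.

Lemma standard_ordering_Bs : standard_ordering Bs B d (fun i => bs * qexp_rev q i d).
Proof.
exact: (standard_ordering_acts_by U'_direct U'_full Bs_acts Bs_eigenvalue_inj U'_neq0
  B_tridiagonal_U').
Qed.

Lemma lower_U_sub i : (lower d U i <= SS (fun j => j < i)%N)%VS.
Proof.
apply/subv_sumP => l li; have ld : (l <= d)%N by rewrite -ltnS.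
apply/subvP => u; rewrite memv_U // => /andP[u_SS _].
by apply: (subvP (eigsumS _)) u_SS => j _ /=; lia.
Qed.

Lemma upper_U_sub i : (upper d U i <= SA (fun j => j < d.+1 - i)%N)%VS.
Proof.
apply/subv_sumP => l il; have ld : (l <= d)%N by rewrite -ltnS.
apply/subvP => u; rewrite memv_U // => /andP[_ u_SA].
by apply: (subvP (eigsumS _)) u_SA => j _ /=; lia.
Qed.

Lemma lower_U'_sub k : (lower d U' k <= SS (fun j => d.+1 - k <= j)%N)%VS.
Proof.
apply/subv_sumP => l lk; have ld : (l <= d)%N by rewrite -ltnS.
apply/subvP => u; rewrite memv_U' // => /andP[u_SS _].
by apply: (subvP (eigsumS _)) u_SS => j _ /=; lia.
Qed.

Lemma upper_U'_sub k : (upper d U' k <= SA (fun j => k <= j)%N)%VS.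
Proof.
apply/subv_sumP => l kl; have ld : (l <= d)%N by rewrite -ltnS.
apply/subvP => u; rewrite memv_U' // => /andP[_ u_SA].
by apply: (subvP (eigsumS _)) u_SA => j _ /=; lia.
Qed.

Section InvariantSubspace.
Variable W : {vspace V}.
Hypotheses (BW : (B @: W <= W)%VS) (BsW : (Bs @: W <= W)%VS).

Lemma invariant_split_flags k : (k <= d.+1)%N ->
  (W <= (W :&: SA (fun j => j < k)%N) + (W :&: SA (fun j => k <= j)%N))%VS /\
  (W <= (W :&: SS (fun j => j < d.+1 - k)%N) + (W :&: SS (fun j => d.+1 - k <= j)%N))%VS.
Proof.
move=> kd; set i := (d.+1 - k)%N.
have [PQ PQ0] := invariant_lower_upper U_direct U_full B_acts B_eigenvalue_inj i BW.
have [PQ' PQ'0] := invariant_lower_upper U'_direct U'_full Bs_acts Bs_eigenvalue_inj k BsW.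
have PP'0 : ((W :&: lower d U i) :&: (W :&: lower d U' k) = 0)%VS.
  apply/eqP; rewrite -subv0 -(eigsum_lt_cap_geq As_std i).
  by apply: capvS; apply: subv_trans (capvSr _ _) _; rewrite ?lower_U_sub ?lower_U'_sub.
have QQ'0 : ((W :&: upper d U i) :&: (W :&: upper d U' k) = 0)%VS.
  apply/eqP; rewrite -subv0 -(eigsum_lt_cap_geq A_std k).
  apply: capvS; apply: subv_trans (capvSr _ _) _; rewrite ?upper_U'_sub //.
  by rewrite -(subKn kd); apply: upper_U_sub.
have [QQ' PP'] := cross_complements PQ PQ0 PQ' PQ'0 PP'0 QQ'0.
split; [rewrite -{1}QQ' | rewrite -{1}PP']; apply: addvS; rewrite subv_cap capvSl /=;
  apply: subv_trans (capvSr _ _) _.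
- by rewrite -(subKn kd); apply: upper_U_sub.
- exact: upper_U'_sub.
- exact: lower_U_sub.
- exact: lower_U'_sub.
Qed.

Lemma invariant_A : (A @: W <= W)%VS.
Proof.
apply: (flag_split_invariant A_std) => [|k /andP[_ kd]].
  rewrite -U_full; apply/subv_sumP => l _; have ld : (l <= d)%N by rewrite -ltnS.
  by apply/subvP => u; rewrite memv_U // => /andP[_]; apply: (subvP (eigsumS _)).
exact: (invariant_split_flags (leqW kd)).1.
Qed.

Lemma invariant_As : (As @: W <= W)%VS.
Proof.
apply: (flag_split_invariant As_std) => [|k /andP[_ kd]].
  rewrite -U_full; apply/subv_sumP => l _; have ld : (l <= d)%N by rewrite -ltnS.
  by apply/subvP => u; rewrite memv_U // => /andP[+ _]; apply: (subvP (eigsumS _)).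
by have := (invariant_split_flags (leq_subr k d.+1)).2; rewrite subKn // leqW.
Qed.

End InvariantSubspace.

Lemma tridiagonal_pair_B_Bs :
  (fullv : {vspace V}) != 0%VS ->
  (forall W : {vspace V}, (A @: W <= W)%VS -> (As @: W <= W)%VS -> W = 0%VS \/ W = fullv) ->
  tridiagonal_pair B Bs.
Proof.
move=> V_neq0 A_As_irreducible; split => //.
- split; first exact: (diagonalizable_acts_by U_direct U_full B_acts B_eigenvalue_inj).
  exact: (diagonalizable_acts_by U'_direct U'_full Bs_acts Bs_eigenvalue_inj).
- by exists d, (fun i => b * qexp q i d); exact: standard_ordering_B.
- by exists d, (fun i => bs * qexp_rev q i d); exact: standard_ordering_Bs.
- move=> W BW BsW; apply: A_As_irreducible.
  + exact: invariant_A BW BsW.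
  + exact: invariant_As BW BsW.
Qed.

End SplitDecompositions.

Theorem theorem9p1 (K : closedFieldType) (V : vectType K) (q : K)
  (Hq0 : q != 0) (Hq : forall n : nat, (0 < n)%N -> q ^+ n != 1)
  (A As : 'End(V)) (HTD : tridiagonal_pair A As)
  (d : nat) (a as_ b bs : K)
  (Ha : a != 0) (Has : as_ != 0) (Hb : b != 0) (Hbs : bs != 0)
  (HA : standard_ordering A As d (fun i => a * qexp q i d))
  (HAs : standard_ordering As A d (fun i => as_ * qexp_rev q i d))
  (* U i = (V*_0 + ... + V*_i) :&: (V_0 + ... + V_{d-i}) *)
  (U : nat -> {vspace V})
  (HU : forall i, (i <= d)%N ->
     U i = ((\sum_(j < d.+1 | (j <= i)%N) leigenspace As (as_ * qexp_rev q j d)) :&: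
            (\sum_(j < d.+1 | (j <= d - i)%N) leigenspace A (a * qexp q j d)))%VS)
  (* U' i = (V*_{d-i} + ... + V*_d) :&: (V_i + ... + V_d) *)
  (U' : nat -> {vspace V})
  (HU' : forall i, (i <= d)%N ->
     U' i = ((\sum_(j < d.+1 | (d - i <= j)%N) leigenspace As (as_ * qexp_rev q j d)) :&:
             (\sum_(j < d.+1 | (i <= j)%N) leigenspace A (a * qexp q j d)))%VS)
  (* known facts from the setting: both families are decompositions of V *)
  (HUdec : (forall i, (i <= d)%N -> U i != 0%VS) /\
           directv (\sum_(i < d.+1) U i) /\ (\sum_(i < d.+1) U i)%VS = fullv)
  (HU'dec : (forall i, (i <= d)%N -> U' i != 0%VS) /\
           directv (\sum_(i < d.+1) U' i) /\ (\sum_(i < d.+1) U' i)%VS = fullv)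
  (B Bs : 'End(V))
  (HB : forall i, (i <= d)%N -> forall v, v \in U i -> B v = (b * qexp q i d) *: v)
  (HBs : forall i, (i <= d)%N -> forall v, v \in U' i -> Bs v = (bs * qexp_rev q i d) *: v) :
  tridiagonal_pair B Bs /\
  standard_ordering B Bs d (fun i => b * qexp q i d) /\
  standard_ordering Bs B d (fun i => bs * qexp_rev q i d).
Proof.
have [U_neq0 [U_direct U_full]] := HUdec.
have [U'_neq0 [U'_direct U'_full]] := HU'dec.
have [V_neq0 _ _ _ A_As_irreducible] := HTD.
split; last split.
- exact: (tridiagonal_pair_B_Bs HA HAs HU HU' Hq0 Hq Ha Has U_direct U_full U'_direct U'_full
    HB HBs Hb Hbs U_neq0 U'_neq0 V_neq0 A_As_irreducible).
- exact: (standard_ordering_B HA HAs HU HU' Hq0 Hq Ha Has U_direct U_full U'_direct U'_full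
    HB HBs Hb Hbs U_neq0).
- exact: (standard_ordering_Bs HA HAs HU HU' Hq0 Hq Ha Has U_direct U_full U'_direct U'_full
    HB HBs Hb Hbs U'_neq0).
Qed.
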